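(* Let $\{q_k\}$ be a sequence of generalized quadratic forms on $\mathbb{R}^n$. Then: (i) some subsequence of $\{q_k\}$ epi-converges to a function $q\not\equiv\infty$; (ii) if $\{q_k\}$ epi-converges to $q$ and there is $r\ge0$ such that $q_k(w)\ge-r\|w\|^2$ for all $w\in\mathbb{R}^n$ and all sufficiently large $k$, then $q$ is a generalized quadratic form and $q(w)\ge-r\|w\|^2$ for all $w\in\mathbb{R}^n$.
   Context: A generalized quadratic form is a function $q=\frac12\langle\cdot,A\cdot\rangle+\delta_L$ with $A$ a symmetric $n\times n$ matrix and $L$ a linear subspace ($\delta_L$ its indicator). Epi-convergence $q_k\to q$: for every $x$, $\liminf q_k(x_k)\ge q(x)$ for every $x_k\to x$, and $\limsup q_k(x_k)\le q(x)$ for some $x_k\to x$ (equivalently, epigraphs converge in the Painlevé–Kuratowski sense). *)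

From HB Require Import structures.
From mathcomp Require Import all_boot all_order all_algebra.
From mathcomp Require Import all_classical all_reals all_analysis.
Set Implicit Arguments. Unset Strict Implicit. Unset Printing Implicit Defensive.
Import Order.TTheory GRing.Theory Num.Theory.
Import numFieldTopology.Exports numFieldNormedType.Exports.
Local Open Scope classical_set_scope.
Local Open Scope ring_scope.

Section GQF.
Variables (R : realType) (n : nat).

Definition sqnorm (w : 'rV[R]_n) : R := (w *m w^T) 0 0.

Definition is_linear_subspace (L : set 'rV[R]_n) : Prop :=
  L 0 /\ (forall (a : R) (x y : 'rV[R]_n), L x -> L y -> L (a *: x + y)).

Definition gqf (A : 'M[R]_n) (L : set 'rV[R]_n) (x : 'rV[R]_n) : \bar R :=
  if `[< L x >] then ((2%:R)^-1 * (x *m A *m x^T) 0 0)%:E else +oo%E.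

Definition is_gqf (q : 'rV[R]_n -> \bar R) : Prop :=
  exists (A : 'M[R]_n) (L : set 'rV[R]_n),
    A^T = A /\ is_linear_subspace L /\ q = gqf A L.

Definition epi_converges (qs : nat -> 'rV[R]_n -> \bar R)
    (q : 'rV[R]_n -> \bar R) : Prop :=
  forall x : 'rV[R]_n,
    (forall xs : nat -> 'rV[R]_n, xs @ \oo --> x ->
        (q x <= limn_einf (fun k => qs k (xs k)))%E) /\
    (exists2 xs : nat -> 'rV[R]_n, xs @ \oo --> x &
        (limn_esup (fun k => qs k (xs k)) <= q x)%E).
End GQF.

From HB Require Import structures.
From mathcomp Require Import all_boot all_order all_algebra.
From mathcomp Require Import all_classical all_reals all_analysis.
Import Order.TTheory GRing.Theory Num.Theory.
Import numFieldTopology.Exports numFieldNormedType.Exports.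
Local Open Scope classical_set_scope.
Local Open Scope ring_scope.

From mathcomp Require Import ring lra zify.

(* (i) Epi-convergence on R^n is sequentially compact.  Enumerate the balls
   B_j with rational centres and radii 1/(m+1); a diagonal argument extracts
   a subsequence along which every inf_{B_j} q_k converges (after contraction
   into [-1, 1]), and q x := sup_{x in B_j} lim_k inf_{B_j} q_k is then the
   epi-limit.  It is finite at 0 because q_k 0 = 0.
   (ii) Every quadratic form F satisfies, for t >= 0,
     F (u + t v) + t F (u - v) = (1 + t) F u + t (1 + t) F v,
   and an inequality between nonnegative combinations of values at linear
   combinations of two points survives epi-limits: recovery sequences bound
   the right-hand side, the liminf inequality the left-hand side, and the
   lower bound -r |w|^2 keeps q away from -oo.  This shows that the domain L
   of q is a subspace and that q satisfies the identity on L; after composing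
   with a projection onto L, the identity yields a symmetric bilinear polar
   form, so q is a generalized quadratic form. *)

Lemma ler_add_scaled_gt0 {R : realFieldType} (a b s : R) : 0 <= s ->
  (forall e, 0 < e -> a <= b + s * e) -> a <= b.
Proof.
move=> s_ge0 a_le; apply/ler_addgt0Pr => e e_gt0.
have s1_gt0 : 0 < s + 1 by lra.
apply: (le_trans (a_le _ (divr_gt0 e_gt0 s1_gt0))); rewrite lerD2l.
by rewrite mulrA ler_pdivrMr //; nra.
Qed.

Section ExtendedReals.
Context {R : realType}.
Local Open Scope ereal_scope.
Implicit Types (x y l : \bar R) (u : (\bar R)^nat).

Lemma ereal_dense {x y} : x < y -> exists a : R, x < a%:E < y.
Proof.
case: x => [x||]; case: y => [y||] //=.
- rewrite lte_fin => xy; exists ((x + y) / 2)%R; rewrite !lte_fin; apply/andP; split; lra.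
- by move=> _; exists (x + 1)%R; rewrite lte_fin ltry andbT; lra.
- by move=> _; exists (y - 1)%R; rewrite lte_fin ltNyr /=; lra.
- by move=> _; exists 0%R; rewrite ltNyr ltry.
Qed.

Lemma lee_from_below x y : (forall a : R, a%:E < x -> a%:E <= y) -> x <= y.
Proof.
move=> below; rewrite leNgt; apply/negP => /ereal_dense [a /andP[ya ax]].
by have := below a ax; rewrite leNgt ya.
Qed.

Lemma lee_from_above x y : (forall a : R, y < a%:E -> x <= a%:E) -> x <= y.
Proof.
move=> above; rewrite leNgt; apply/negP => /ereal_dense [a /andP[ya ax]].
by have := above a ya; rewrite leNgt ax.
Qed.

Lemma limn_einfE u : limn_einf u = ereal_sup (range (einfs u)).
Proof. by rewrite limn_einf_lim; apply/cvg_lim => //; exact: cvg_einfs_sup. Qed.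

Lemma limn_esupE u : limn_esup u = ereal_inf (range (esups u)).
Proof. by rewrite limn_esup_lim; apply/cvg_lim => //; exact: cvg_esups_inf. Qed.

Lemma limn_einf_ge_near u l :
  (forall a : R, a%:E < l -> \forall k \near \oo, a%:E <= u k) -> l <= limn_einf u.
Proof.
move=> near_a; apply: lee_from_below => a al; rewrite limn_einfE.
have [N _ u_a] := near_a a al.
apply: le_ereal_sup_tmp; exists (einfs u N); first by exists N.
by apply: le_ereal_inf_tmp => _ [k /= Nk <-]; exact: u_a.
Qed.

Lemma limn_esup_le_near u l :
  (forall a : R, l < a%:E -> \forall k \near \oo, u k <= a%:E) -> limn_esup u <= l.
Proof.
move=> near_a; apply: lee_from_above => a al; rewrite limn_esupE.
have [N _ u_a] := near_a a al.
apply: (@le_trans _ _ (esups u N)); first by apply: ereal_inf_lbound; exists N.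
by apply: ge_ereal_sup => _ [k /= Nk <-]; exact: u_a.
Qed.

Lemma limn_einf_gt_near u (a : R) :
  a%:E < limn_einf u -> \forall k \near \oo, a%:E < u k.
Proof.
rewrite limn_einfE => /ereal_sup_gt [_ [N _ <-]] aN; exists N => // k /= Nk.
by apply: (lt_le_trans aN); apply: ereal_inf_lbound; exists k.
Qed.

Lemma limn_esup_lt_near u (a : R) :
  limn_esup u < a%:E -> \forall k \near \oo, u k < a%:E.
Proof.
rewrite limn_esupE => /ereal_inf_lt [_ [N _ <-]] aN; exists N => // k /= Nk.
by apply: le_lt_trans aN; apply: ereal_sup_ubound; exists k.
Qed.

End ExtendedReals.

Lemma homo_ltn_geq {f : nat -> nat} :
  {homo f : k l / (k < l)%N} -> forall m, (m <= f m)%N.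
Proof. by move=> f_incr; elim=> // m IH; exact: leq_ltn_trans IH (f_incr _ _ (ltnSn m)). Qed.

Section DiagonalExtraction.
Context {R : realType} {v : nat -> nat -> R}.
Hypothesis v_bounded : forall j, bounded_fun (v j).

Let extract (g : nat -> nat) j :
  exists2 f : nat -> nat, {homo f : k l / (k < l)%N} & cvgn (v j \o g \o f).
Proof.
have [|f f_incr f_cvg] := @bolzano_weierstrass R (v j \o g).
  have [M [M_real vM]] := v_bounded j; exists M; split => // N MN k _; exact: vM.
exists f => //; apply: (homo_ltn ltn_trans) => m.
by have := (increasing_seqP f).2 f_incr m.
Qed.

Let ext g j := projT1 (cid2 (extract g j)).

Let ext_homo g j : {homo ext g j : k l / (k < l)%N}.
Proof. by rewrite /ext; case: cid2. Qed.

Let ext_cvg g j : cvgn (v j \o g \o ext g j).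
Proof. by rewrite /ext; case: cid2. Qed.

Fixpoint nested_extraction j : nat -> nat :=
  if j is j'.+1 then nested_extraction j' \o ext (nested_extraction j') j
  else ext id 0.

Local Notation psi := nested_extraction.

Let psi_homo j : {homo psi j : k l / (k < l)%N}.
Proof. by elim: j => [|j IH] //= a b ab; apply: IH; exact: ext_homo. Qed.

Let psi_cvg j : cvgn (v j \o psi j).
Proof. by case: j => [|j]; [exact: (ext_cvg id 0) | exact: ext_cvg]. Qed.

Let psi_factor {j i : nat} : (j <= i)%N ->
  exists tau : nat -> nat, {homo tau : k l / (k < l)%N} /\ psi i =1 psi j \o tau.
Proof.
move=> /subnK <-; elim: (i - j)%N => [|d [tau [tau_homo tauE]]].
  by exists id; split.
exists (tau \o ext (psi (d + j)) (d + j).+1); split => [a b ab|m /=].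
  by apply: tau_homo; exact: ext_homo.
exact: tauE.
Qed.

Lemma diagonal_extraction : exists phi : nat -> nat,
  {homo phi : k l / (k < l)%N} /\ forall j, cvgn (v j \o phi).
Proof.
exists (fun k => psi k k); split.
  apply: (homo_ltn ltn_trans) => k /=.
  by apply: psi_homo; exact: homo_ltn_geq (ext_homo _ _) k.+1.
move=> j; have /cvg_ex [l psi_l] := psi_cvg j; apply/cvg_ex; exists l.
apply/cvgrPdist_lt => e e_gt0.
have [N _ psi_e] := (cvgrPdist_lt _ _).1 psi_l e e_gt0.
exists (N + j)%N => // k /= Nk.
have [tau [tau_homo tauE]] := psi_factor (leq_trans (leq_addl N j) Nk).
rewrite tauE; apply: (psi_e (tau k)); apply: leq_trans (homo_ltn_geq tau_homo k).
exact: leq_trans (leq_addr j N) Nk.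
Qed.

End DiagonalExtraction.

Lemma ereal_approx_above {R : realType} {l : \bar R} : l != +oo%E ->
  exists T : nat -> R, (forall N, (l < (T N)%:E)%E) /\
    forall a : R, (l < a%:E)%E -> \forall N \near \oo, T N <= a.
Proof.
case: l => [r _| //|_].
  exists (fun N => r + N.+1%:R^-1); split => [N|a]; first by rewrite lte_fin ltrDl.
  rewrite lte_fin -subr_gt0 => ar_gt0.
  apply: filterS (near_infty_natSinv_lt (PosNum ar_gt0)) => N /=; move: (N.+1%:R^-1) => z; lra.
exists (fun N => - N%:R); split => [N|a _]; first exact: ltNyr.
by apply: filterS (nbhs_infty_ger (- a)) => N; lra.
Qed.

Lemma near_diag_choice (P : nat -> nat -> Prop) :
  (forall M, \forall k \near \oo, P M k) ->
  exists N : nat -> nat, (forall M, \forall k \near \oo, (M <= N k)%N) /\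
    \forall k \near \oo, P (N k) k.
Proof.
move=> P_near.
have /choice [K K_P] : forall M, exists K, forall k, (K <= k)%N -> P M k.
  by move=> M; have [K _ K_P] := P_near M; exists K.
pose N k := \max_(M < k.+1 | (K M <= k)%N) (M : nat).
exists N; split.
  move=> M; exists (maxn M (K M)) => // k /=; rewrite geq_max => /andP [Mk KMk].
  exact: (@leq_bigmax_cond _ (fun i : 'I_k.+1 => (K i <= k)%N) _ (Ordinal (Mk : (M < k.+1)%N))).
exists (K 0%N) => // k /= K0k; apply: K_P.
by apply: (big_ind (fun M => (K M <= k)%N)) => // a b; rewrite /maxn; case: ifP.
Qed.

Lemma recovery_sequence {R : realType} {V : pseudoMetricType R}
    (h : nat -> V -> \bar R) (x : V) (l : \bar R) :
  (forall a e : R, (l < a%:E)%E -> 0 < e ->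
     \forall k \near \oo, exists2 y, ball x e y & (h k y < a%:E)%E) ->
  exists2 xs : nat -> V, xs @ \oo --> x & (limn_esup (fun k => h k (xs k)) <= l)%E.
Proof.
move=> h_near; have [->|l_fin] := eqVneq l +oo%E.
  by exists (fun=> x); [exact: cvg_cst | rewrite leey].
have [T [l_T T_l]] := ereal_approx_above l_fin.
pose P N k y := ball x N.+1%:R^-1 y /\ (h k y < (T N)%:E)%E.
have [N [N_oo N_P]] : exists N : nat -> nat, (forall M, \forall k \near \oo, (M <= N k)%N)
    /\ \forall k \near \oo, exists y, P (N k) k y.
  apply: (near_diag_choice (fun M k => exists y, P M k y)) => M.
  have M_gt0 : 0 < M.+1%:R^-1 :> R by rewrite invr_gt0.
  by apply: filterS (h_near _ _ (l_T M) M_gt0) => k [y]; exists y.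
pose xs k := xget x (P (N k) k).
have xs_P : \forall k \near \oo, P (N k) k (xs k) by apply: filterS N_P => k; exact: xgetPex.
exists xs.
  apply/cvg_ballP => e e_gt0.
  have [M _ /(_ M (leqnn M)) M_e] := near_infty_natSinv_lt (PosNum e_gt0).
  apply: filterS2 (N_oo M) xs_P => k MN [xs_k _]; apply: le_ball xs_k.
  apply/ltW/(le_lt_trans _ M_e).
  by rewrite lef_pV2 ?posrE ?ltr0n // ler_nat ltnS.
apply: limn_esup_le_near => a l_a; have [M _ T_a] := T_l a l_a.
apply: filterS2 (N_oo M) xs_P => k MN [_ h_k].
by apply/ltW/(lt_le_trans h_k); rewrite lee_fin; exact: T_a.
Qed.

Section EpiCompactness.
Context {R : realType} {n : nat}.
Local Notation V := 'rV[R]_n.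

Lemma rat_approx (x : V) (d : R) : 0 < d -> exists c : 'rV[rat]_n, ball x d (map_mx ratr c).
Proof.
move=> d_gt0.
have /fin_all_exists [c xc] (j : 'I_n) : exists q : rat, `|x 0 j - ratr q| < d.
  have [q] := @rat_in_itvoo R (x 0 j - d) (x 0 j + d) ltac:(lra).
  by rewrite in_itv /= => /andP [q_gt q_lt]; exists q; rewrite ltr_norml; apply/andP; split; lra.
exists (\row_j c j); rewrite -ball_normE /= [ `|_| ]mx_normrE.
by apply/bigmax_ltP; split => // -[i j] _ /=; rewrite !mxE (ord1 i).
Qed.

Definition rat_ball (j : nat) : set V :=
  if @unpickle ('rV[rat]_n * nat)%type j is Some (c, m)
  then ball (map_mx ratr c : V) m.+1%:R^-1 else set0.

Lemma rat_ball_open j : open (rat_ball j).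
Proof. by rewrite /rat_ball; case: unpickle => [[c m]|]; [exact: ball_open | exact: open0]. Qed.

Lemma rat_ball_basis (x : V) {e : R} : 0 < e ->
  exists j, rat_ball j x /\ rat_ball j `<=` ball x e.
Proof.
move=> e_gt0; have e2_gt0 : 0 < e / 2 by rewrite divr_gt0.
have [m _ /(_ m (leqnn m)) /= m_e] := near_infty_natSinv_lt (PosNum e2_gt0).
have [c x_c] := @rat_approx x m.+1%:R^-1 ltac:(by rewrite invr_gt0).
exists (pickle (c, m)); rewrite /rat_ball pickleK; split; first exact: ball_sym.
move=> y c_y; apply: (le_ball _ (ball_triangle x_c c_y)).
by move: m_e; move: (m.+1%:R^-1) => z; lra.
Qed.

Section BallLimit.
Variable f : nat -> V -> \bar R.

Definition ball_inf j k : R := contract (ereal_inf (f k @` rat_ball j)).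

Lemma ball_inf_bounded j : bounded_fun (ball_inf j).
Proof.
by exists 1; split => // M M_gt1 k _; exact: le_trans (contract_le1 _) (ltW M_gt1).
Qed.

Variable phi : nat -> nat.
Hypothesis phi_cvg : forall j, cvgn (ball_inf j \o phi).

Let ball_lim j := limn (ball_inf j \o phi).

Let ball_lim_le1 j : `|ball_lim j| <= 1.
Proof.
have ball_inf_le1 k : -1 <= ball_inf j k <= 1 by rewrite -ler_norml contract_le1.
rewrite ler_norml; apply/andP; split.
  by apply: limr_ge; [exact: phi_cvg | apply: nearW => k; case/andP: (ball_inf_le1 (phi k))].
by apply: limr_le; [exact: phi_cvg | apply: nearW => k; case/andP: (ball_inf_le1 (phi k))].
Qed.

Definition epi_lim_ball (x : V) : \bar R :=
  ereal_sup [set expand (ball_lim j) | j in [set j | rat_ball j x]].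

Lemma epi_lim_ball_le_liminf x xs : xs @ \oo --> x ->
  (epi_lim_ball x <= limn_einf (fun k => f (phi k) (xs k)))%E.
Proof.
move=> xs_x; apply: ge_ereal_sup => _ [j Bj_x <-]; apply: limn_einf_ge_near => a a_lt.
have /(cvgrPdist_lt _ _).1 /(_ (ball_lim j - contract a%:E)) near_lim := phi_cvg j.
rewrite lt_expandRL ?inE ?ball_lim_le1 // -subr_gt0 in a_lt.
have xs_Bj : \forall k \near \oo, rat_ball j (xs k).
  by apply: xs_x; apply: open_nbhs_nbhs; split; [exact: rat_ball_open | exact: Bj_x].
apply: filterS2 (near_lim a_lt) xs_Bj => k lim_k Bj_xk.
have : contract a%:E < ball_inf j (phi k).
  by move: lim_k; rewrite /ball_lim ltr_norml /= => /andP [_ lim_k]; lra.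
rewrite /ball_inf lt_contract => /ltW /le_trans; apply.
by apply: ereal_inf_lbound; exists (xs k).
Qed.

Lemma epi_lim_ball_recovery x : exists2 xs : nat -> V, xs @ \oo --> x &
  (limn_esup (fun k => f (phi k) (xs k)) <= epi_lim_ball x)%E.
Proof.
apply: (recovery_sequence (fun k => f (phi k))) => a e x_a e_gt0.
have [j [Bj_x Bj_sub]] := rat_ball_basis x e_gt0.
have lim_a : ball_lim j < contract a%:E.
  rewrite -lt_expandLR ?inE ?ball_lim_le1 //; apply: le_lt_trans x_a.
  by apply: ereal_sup_ubound; exists j.
have /(cvgrPdist_lt _ _).1 /(_ (contract a%:E - ball_lim j)) near_lim := phi_cvg j.
rewrite -subr_gt0 in lim_a; apply: filterS (near_lim lim_a) => k lim_k.
have : ball_inf j (phi k) < contract a%:E.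
  by move: lim_k; rewrite /ball_lim ltr_norml /= => /andP [lim_k _]; lra.
rewrite /ball_inf lt_contract => /ereal_inf_lt [_ [y Bj_y <-] f_y].
by exists y => //; exact: Bj_sub.
Qed.

Lemma epi_lim_ball_epi_converges : epi_converges (fun k => f (phi k)) epi_lim_ball.
Proof. by move=> x; split; [exact: epi_lim_ball_le_liminf | exact: epi_lim_ball_recovery]. Qed.

End BallLimit.

Lemma epi_compact (f : nat -> V -> \bar R) : exists phi : nat -> nat,
  {homo phi : k l / (k < l)%N} /\ exists g, epi_converges (fun k => f (phi k)) g.
Proof.
have [phi [phi_homo phi_cvg]] := diagonal_extraction (ball_inf_bounded f).
by exists phi; split => //; exists (epi_lim_ball f phi); exact: epi_lim_ball_epi_converges.
Qed.

End EpiCompactness.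

Section EpiLimit.
Context {R : realType} {n : nat}.
Local Notation V := 'rV[R]_n.
Context {f : nat -> V -> \bar R} {g : V -> \bar R}.
Hypothesis epi : epi_converges f g.

Lemma epi_le_cst x (c : \bar R) : (forall k, f k x = c) -> (g x <= c)%E.
Proof.
move=> fx_c; apply: (le_trans ((epi x).1 _ (cvg_cst x))).
have -> : (fun k => f k (cst x k)) = cst c by apply: funext.
by rewrite (cvg_limn_einf_sup (cvg_cst c)).1.
Qed.

Section Combination.
Variables (c1 c2 d1 d2 a1 b1 a2 b2 : R).
Hypotheses (c1_ge0 : 0 <= c1) (c2_ge0 : 0 <= c2) (d1_ge0 : 0 <= d1) (d2_ge0 : 0 <= d2).
Hypothesis f_comb : forall k u v,
  (c1%:E * f k (a1 *: u + b1 *: v) + c2%:E * f k (a2 *: u + b2 *: v)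
   <= d1%:E * f k u + d2%:E * f k v)%E.

Lemma epi_comb_lt {x y : V} {al be X Y : R} :
  (al%:E < g (a1 *: x + b1 *: y))%E -> (be%:E < g (a2 *: x + b2 *: y))%E ->
  (g x < X%:E)%E -> (g y < Y%:E)%E ->
  c1 * al + c2 * be <= d1 * X + d2 * Y.
Proof.
move=> gu gv gx gy.
have [xs xs_x /le_lt_trans /(_ gx) /limn_esup_lt_near xs_sup] := (epi x).2.
have [ys ys_y /le_lt_trans /(_ gy) /limn_esup_lt_near ys_sup] := (epi y).2.
pose us k := a1 *: xs k + b1 *: ys k.
pose vs k := a2 *: xs k + b2 *: ys k.
have us_u : us @ \oo --> a1 *: x + b1 *: y.
  by apply: cvgD; apply: cvgZl_tmp.
have vs_v : vs @ \oo --> a2 *: x + b2 *: y.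
  by apply: cvgD; apply: cvgZl_tmp.
have /limn_einf_gt_near us_inf := lt_le_trans gu ((epi _).1 _ us_u).
have /limn_einf_gt_near vs_inf := lt_le_trans gv ((epi _).1 _ vs_v).
have : \forall k \near \oo, [/\ f k (xs k) < X%:E, f k (ys k) < Y%:E,
    al%:E < f k (us k) & be%:E < f k (vs k)]%E.
  by near=> k; split; near: k; [exact: xs_sup | exact: ys_sup | exact: us_inf | exact: vs_inf].
move=> [N _ /(_ N (leqnn N)) [fx fy fu fv]]; rewrite -lee_fin !EFinD !EFinM.
apply: le_trans (leeD (lee_wpmul2l _ (ltW fx)) (lee_wpmul2l _ (ltW fy))); rewrite ?lee_fin //.
apply: le_trans (f_comb N (xs N) (ys N)).
by apply: leeD; apply: lee_wpmul2l; rewrite ?lee_fin // ltW.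
Unshelve. all: by end_near.
Qed.

Hypothesis g_gtNy : forall x, (-oo < g x)%E.

Lemma epi_comb_dom x y : 0 < c1 -> (g x < +oo)%E -> (g y < +oo)%E ->
  (g (a1 *: x + b1 *: y) < +oo)%E.
Proof.
move=> c1_gt0 /ereal_dense [X /andP [gx _]] /ereal_dense [Y /andP [gy _]].
have [be /andP [_ gv]] := ereal_dense (g_gtNy (a2 *: x + b2 *: y)).
rewrite ltey; apply/negP => /eqP gu.
pose al := (d1 * X + d2 * Y - c2 * be) / c1 + 1.
have gu_al : (al%:E < g (a1 *: x + b1 *: y))%E by rewrite gu ltry.
have := epi_comb_lt gu_al gv gx gy.
rewrite /al mulrDr mulr1 mulrC divfK ?gt_eqF //; lra.
Qed.

Lemma epi_comb_le x y (X Y U W : R) :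
  g x = X%:E -> g y = Y%:E -> g (a1 *: x + b1 *: y) = U%:E -> g (a2 *: x + b2 *: y) = W%:E ->
  c1 * U + c2 * W <= d1 * X + d2 * Y.
Proof.
move=> gx gy gu gv; apply: (@ler_add_scaled_gt0 _ _ _ (c1 + c2 + d1 + d2)) => [|e e_gt0].
  by rewrite !addr_ge0.
have := @epi_comb_lt x y (U - e) (W - e) (X + e) (Y + e).
rewrite gx gy gu gv !lte_fin => /(_ ltac:(lra) ltac:(lra) ltac:(lra) ltac:(lra)).
rewrite !mulrBr !mulrDr; lra.
Qed.

End Combination.
End EpiLimit.

Section GeneralizedQuadraticForms.
Context {R : realType} {n : nat}.
Local Notation V := 'rV[R]_n.
Implicit Types (A : 'M[R]_n) (L : set V) (x y u v : V).

Definition mxform A x y : R := (x *m A *m y^T) 0 0.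
Definition qform A x : R := (2%:R)^-1 * mxform A x x.

Lemma mxformDl A a b x y z :
  mxform A (a *: x + b *: y) z = a * mxform A x z + b * mxform A y z.
Proof. by rewrite /mxform !mulmxDl -!scalemxAl !mxE. Qed.

Lemma mxformDr A a b x y z :
  mxform A z (a *: x + b *: y) = a * mxform A z x + b * mxform A z y.
Proof. by rewrite /mxform !linearD !linearZ /= !mxE. Qed.

Lemma qformD A a b x y : qform A (a *: x + b *: y) =
  a ^+ 2 * qform A x + a * b * ((2%:R)^-1 * (mxform A x y + mxform A y x))
  + b ^+ 2 * qform A y.
Proof. by rewrite /qform mxformDl !mxformDr; ring. Qed.

Lemma qform0 A : qform A 0 = 0.
Proof. by rewrite /qform /mxform !mul0mx mxE mulr0. Qed.

Lemma linear_subspace_comb L a b x y : is_linear_subspace L -> L x -> L y ->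
  L (a *: x + b *: y).
Proof.
rewrite /is_linear_subspace => -[L0 L_comb] Lx Ly; apply: (L_comb) => //.
by rewrite -[b *: y]addr0; apply: L_comb.
Qed.

Lemma gqf_in A L x : L x -> gqf A L x = (qform A x)%:E.
Proof. by move=> Lx; rewrite /gqf asboolT. Qed.

Lemma gqf_notin A L x : ~ L x -> gqf A L x = +oo%E.
Proof. by move=> Lx; rewrite /gqf asboolF. Qed.

Lemma is_gqf0 (q : V -> \bar R) : is_gqf q -> q 0 = 0%E.
Proof. by move=> [A [L [_ [[L0 _] ->]]]]; rewrite gqf_in // qform0. Qed.

Definition quad_identity (c1 c2 d1 d2 a1 b1 a2 b2 : R) : Prop :=
  forall A u v, c1 * qform A (a1 *: u + b1 *: v) + c2 * qform A (a2 *: u + b2 *: v)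
                = d1 * qform A u + d2 * qform A v.

Lemma quad_identity_swap {c1 c2 d1 d2 a1 b1 a2 b2 : R} :
  quad_identity c1 c2 d1 d2 a1 b1 a2 b2 -> quad_identity c2 c1 d1 d2 a2 b2 a1 b1.
Proof. by move=> quad_id A u v; rewrite addrC quad_id. Qed.

Lemma gqf_comb_le A L (c1 c2 d1 d2 a1 b1 a2 b2 : R) :
  is_linear_subspace L -> 0 < d1 -> 0 < d2 ->
  quad_identity c1 c2 d1 d2 a1 b1 a2 b2 -> forall u v,
  (c1%:E * gqf A L (a1 *: u + b1 *: v) + c2%:E * gqf A L (a2 *: u + b2 *: v)
   <= d1%:E * gqf A L u + d2%:E * gqf A L v)%E.
Proof.
move=> L_sub d1_gt0 d2_gt0 quad_id u v.
have scale_neqNy d w : 0 < d -> (d%:E * gqf A L w != -oo)%E.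
  by rewrite /gqf; case: asboolP => _ d_gt0; rewrite ?gt0_muley ?lte_fin.
have [Lu|/gqf_notin ->] := pselect (L u); last first.
  by rewrite gt0_muley ?lte_fin // addye ?leey ?scale_neqNy.
have [Lv|/gqf_notin ->] := pselect (L v); last first.
  by rewrite gt0_muley ?lte_fin // addey ?leey ?scale_neqNy.
have L_comb a b : L (a *: u + b *: v) by exact: linear_subspace_comb.
rewrite (gqf_in _ _ _ (L_comb a1 b1)) (gqf_in _ _ _ (L_comb a2 b2)) !gqf_in //.
by rewrite -!EFinM -!EFinD quad_id.
Qed.

Lemma quad_identity_parallelogram t :
  quad_identity 1 t (1 + t) (t * (1 + t)) 1 t 1 (-1).
Proof. by move=> A u v; rewrite !qformD; ring. Qed.

Lemma quad_identity_parallelogram_inv t : 0 <= t ->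
  quad_identity (1 + t) (t * (1 + t)) 1 t
    (1 + t)^-1 (t / (1 + t)) (1 + t)^-1 (- (1 + t)^-1).
Proof.
move=> t_ge0 A u v; have t1 : 1 + t != 0 by rewrite gt_eqF //; lra.
by rewrite !qformD; field.
Qed.

End GeneralizedQuadraticForms.

Arguments quad_identity {R} n.

Section ParallelogramEquation.
Context {R : realFieldType} {V : lmodType R}.
Variable G : V -> R.
Hypothesis G_par : forall (x y : V) (t : R), 0 <= t ->
  G (x + t *: y) + t * G (x - y) = (1 + t) * G x + t * (1 + t) * G y.

Definition polar x y := (G (x + y) - G x - G y) / 2.

Lemma quad_fun0 : G 0 = 0.
Proof. by have := G_par 0 0 1 ler01; rewrite scaler0 !addr0 subr0; lra. Qed.

Lemma quad_funN y : G (- y) = G y.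
Proof. by have := G_par 0 y 1 ler01; rewrite scale1r add0r sub0r quad_fun0; lra. Qed.

Lemma quad_fun_parallelogram x y : G (x + y) + G (x - y) = 2 * G x + 2 * G y.
Proof. by have := G_par x y 1 ler01; rewrite scale1r; lra. Qed.

Lemma polarNr x y : polar x (- y) = - polar x y.
Proof. by rewrite /polar quad_funN; have := quad_fun_parallelogram x y; lra. Qed.

Lemma quad_funDZ x y t : G (x + t *: y) = G x + 2 * t * polar x y + t ^+ 2 * G y.
Proof.
wlog t_ge0 : y t / 0 <= t.
  move=> wlog_t; have [|t_lt0] := lerP 0 t; first exact: wlog_t.
  have := wlog_t (- y) (- t) ltac:(lra).
  by rewrite scaleNr scalerN opprK polarNr quad_funN sqrrN => ->; ring.
have G_sub : G (x - y) = 2 * G x + 2 * G y - G (x + y).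
  by have := quad_fun_parallelogram x y; lra.
rewrite -(addrK (t * G (x - y)) (G (x + t *: y))) G_par // G_sub /polar.
by field.
Qed.

Lemma polar0l y : polar 0 y = 0.
Proof. by rewrite /polar add0r quad_fun0; field. Qed.

Lemma quad_funZ t y : G (t *: y) = t ^+ 2 * G y.
Proof. by rewrite -[t *: y]add0r quad_funDZ quad_fun0 polar0l; ring. Qed.

Lemma polarC x y : polar x y = polar y x.
Proof. by rewrite /polar [y + x]addrC; field. Qed.

Lemma polarZr t x y : polar x (t *: y) = t * polar x y.
Proof. by rewrite {1}/polar quad_funDZ quad_funZ; field. Qed.

Lemma polarDl x z y : polar (x + z) y = polar x y + polar z y.
Proof.
have Gpar_shift := quad_fun_parallelogram (x + y) (z + y).
rewrite addrACA -mulr2n -scaler_nat opprD addrACA subrr addr0 in Gpar_shift.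
have := quad_fun_parallelogram x z; have := quad_funDZ (x + z) y 2.
move: Gpar_shift; rewrite /polar; lra.
Qed.

Lemma polar_diag x : polar x x = G x.
Proof. by have := quad_funZ 2 x; rewrite scaler_nat mulr2n /polar => ->; field. Qed.

End ParallelogramEquation.

Lemma quad_fun_mxform {R : realFieldType} {n : nat} {G : 'rV[R]_n -> R} :
  (forall x y t, 0 <= t ->
     G (x + t *: y) + t * G (x - y) = (1 + t) * G x + t * (1 + t) * G y) ->
  exists2 M : 'M[R]_n, M^T = M & forall x, G x = (x *m M *m x^T) 0 0.
Proof.
move=> G_par; exists (\matrix_(i, j) polar G (delta_mx 0 i) (delta_mx 0 j)).
  by apply/matrixP => i j; rewrite !mxE polarC.
have polar_suml (F : 'I_n -> 'rV[R]_n) y :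
    polar G (\sum_i F i) y = \sum_i polar G (F i) y.
  by apply: (big_morph (polar G ^~ y)) => [a b|]; rewrite ?polarDl ?polar0l.
move=> x; rewrite -polar_diag // {1}[x]row_sum_delta polar_suml mxE.
apply: eq_bigr => j _; rewrite polarC // {1}[x]row_sum_delta polar_suml !mxE mulr_suml.
apply: eq_bigr => i _; rewrite polarZr // polarC // polarZr // polarC // !mxE; ring.
Qed.

Section SubspaceProjection.
Context {F : fieldType} {n : nat} {D : set 'rV[F]_n}.
Hypotheses (D0 : D 0) (D_comb : forall a x y, D x -> D y -> D (a *: x + y)).

Let rowspace_in_D (E : 'M[F]_n) := forall y : 'rV_n, (y <= E)%MS -> D y.

Let rowspace_in_D_adds E x : rowspace_in_D E -> D x -> rowspace_in_D (E + x)%MS.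
Proof.
move=> ED Dx y /sub_addsmxP [[u1 u2] ->] /=.
rewrite [u2]mx11_scalar mul_scalar_mx addrC.
by apply: D_comb => //; apply: ED; exact: submxMl.
Qed.

Let rowspace_spanning_D : exists E, rowspace_in_D E /\ forall x, D x -> (x <= E)%MS.
Proof.
suff grow k E : rowspace_in_D E -> (n - \rank E <= k)%N ->
    exists E', rowspace_in_D E' /\ forall x, D x -> (x <= E')%MS.
  apply: (grow n 0); last by rewrite leq_subr.
  by move=> y; rewrite submx0 => /eqP ->.
elim: k E => [|k IH] E ED rankE.
  exists E; split=> // x _; apply: submx_full.
  by rewrite /row_full eqn_leq rank_leq_col /= -subn_eq0 -leqn0.
have [DE|] := pselect (forall x, D x -> (x <= E)%MS); first by exists E.
move=> /existsNP [x /not_implyP [Dx xE]].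
apply: (IH (E + x)%MS); first exact: rowspace_in_D_adds.
suff : (\rank E < \rank (E + x)%MS)%N by move: rankE; clear; lia.
rewrite (ltn_leqif (mxrank_leqif_sup (addsmxSl E x))).
by apply/negP => /(submx_trans (addsmxSr E x)).
Qed.

Lemma subspace_projection :
  exists P : 'M[F]_n, (forall x, D x -> x *m P = x) /\ (forall x, D (x *m P)).
Proof.
have [E [ED DE]] := rowspace_spanning_D.
exists (pinvmx E *m E); split => x.
  by move=> Dx; rewrite mulmxA mulmxKpV // DE.
by apply: ED; rewrite mulmxA submxMl.
Qed.

End SubspaceProjection.

Lemma cvg_sqnorm {R : realType} {n : nat} (xs : nat -> 'rV[R]_n) (w : 'rV[R]_n) :
  xs @ \oo --> w -> (fun k => sqnorm (xs k)) @ \oo --> sqnorm w.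
Proof.
have sqnormE (v : 'rV[R]_n) : sqnorm v = \sum_(j < n) v 0 j * v 0 j.
  by rewrite /sqnorm mxE; apply: eq_bigr => j _; rewrite mxE.
move=> xs_w; rewrite sqnormE (funext (fun k => sqnormE (xs k))).
apply: (cvg_big add_continuous) => j _.
have xs_j : (fun k => xs k 0 j) @ \oo --> w 0 j.
  exact: (cvg_comp _ _ xs_w (@coord_continuous _ _ _ 0 j w)).
exact: cvgM.
Qed.

Lemma scaler_comb {R : ringType} {V : lmodType R} (a b c d e f : R) (x y : V) :
  a *: (c *: x + d *: y) + b *: (e *: x + f *: y) = (a * c + b * e) *: x + (a * d + b * f) *: y.
Proof. by rewrite !scalerDr !scalerA addrACA -!scalerDl. Qed.

Lemma sqnorm0 {R : realType} {n : nat} : sqnorm (0 : 'rV[R]_n) = 0.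
Proof. by rewrite /sqnorm mul0mx mxE. Qed.

Section EpiLimitOfGqf.
Context {R : realType} {n : nat}.
Local Notation V := 'rV[R]_n.
Context {qs : nat -> V -> \bar R} {q : V -> \bar R} {r : R}.
Hypothesis qs_gqf : forall k, is_gqf (qs k).
Hypothesis epi : epi_converges qs q.
Hypothesis qs_ge : \forall k \near \oo, forall w, (- (r * sqnorm w)%:E <= qs k w)%E.

Lemma epi_lim_ge w : (- (r * sqnorm w)%:E <= q w)%E.
Proof.
apply: lee_from_above => a qw_a.
have [xs xs_w /le_lt_trans /(_ qw_a) /limn_esup_lt_near qs_a] := (epi w).2.
have bound_a : \forall k \near \oo, - (r * sqnorm (xs k)) <= a.
  apply: filterS2 qs_ge qs_a => k /(_ (xs k)) lo up.
  by rewrite -lee_fin EFinN; exact/ltW/(le_lt_trans lo up).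
have lim_w : (fun k => - (r * sqnorm (xs k))) @ \oo --> - (r * sqnorm w).
  by apply: cvgN; apply: cvgMl_tmp; exact: cvg_sqnorm.
rewrite -EFinN lee_fin -(cvg_lim _ lim_w) //.
by apply: limr_le => //; apply/cvg_ex; eexists; exact: lim_w.
Qed.

Lemma epi_lim_gtNy w : (-oo < q w)%E.
Proof. by apply: lt_le_trans (epi_lim_ge w); rewrite -EFinN ltNyr. Qed.

Lemma epi_lim0 : q 0 = 0%E.
Proof.
apply/eqP; rewrite eq_le; apply/andP; split; last first.
  by have := epi_lim_ge 0; rewrite sqnorm0 mulr0 oppe0.
by apply: (epi_le_cst epi) => k; exact: is_gqf0.
Qed.

Let dom := [set x | (q x < +oo)%E].
Let Q x := fine (q x).

Let QE x : dom x -> q x = (Q x)%:E.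
Proof.
by move=> dom_x; rewrite /Q fineK // fin_numE -ltNye -ltey epi_lim_gtNy.
Qed.

Let qs_comb c1 c2 d1 d2 a1 b1 a2 b2 : 0 < d1 -> 0 < d2 ->
  quad_identity n c1 c2 d1 d2 a1 b1 a2 b2 -> forall k u v,
  (c1%:E * qs k (a1 *: u + b1 *: v) + c2%:E * qs k (a2 *: u + b2 *: v)
   <= d1%:E * qs k u + d2%:E * qs k v)%E.
Proof.
move=> d1_gt0 d2_gt0 quad_id k u v; have [A [L [_ [L_sub ->]]]] := qs_gqf k.
exact: gqf_comb_le.
Qed.

Let comb_dom {c1 c2 d1 d2 a1 b1 a2 b2 : R} {x y : V} :
  quad_identity n c1 c2 d1 d2 a1 b1 a2 b2 -> 0 < c1 -> 0 <= c2 -> 0 < d1 -> 0 < d2 ->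
  dom x -> dom y -> dom (a1 *: x + b1 *: y).
Proof.
move=> quad_id c1_gt0 c2_ge0 d1_gt0 d2_gt0.
apply: (epi_comb_dom epi c1 c2 d1 d2 a1 b1 a2 b2) => //; rewrite ?ltW //.
- exact: qs_comb.
- exact: epi_lim_gtNy.
Qed.

Let comb_le {c1 c2 d1 d2 a1 b1 a2 b2 : R} {x y : V} :
  quad_identity n c1 c2 d1 d2 a1 b1 a2 b2 -> 0 <= c1 -> 0 <= c2 -> 0 < d1 -> 0 < d2 ->
  dom x -> dom y ->
  dom (a1 *: x + b1 *: y) -> dom (a2 *: x + b2 *: y) ->
  c1 * Q (a1 *: x + b1 *: y) + c2 * Q (a2 *: x + b2 *: y) <= d1 * Q x + d2 * Q y.
Proof.
move=> quad_id c1_ge0 c2_ge0 d1_gt0 d2_gt0 dom_x dom_y dom_u dom_v.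
apply: (epi_comb_le epi c1 c2 d1 d2 a1 b1 a2 b2) => //; rewrite ?ltW ?QE //.
exact: qs_comb.
Qed.

Let dom0 : dom 0.
Proof. by rewrite /dom /= epi_lim0 ltry. Qed.

Let dom_shift t x y : 0 < t -> dom x -> dom y -> dom (x + t *: y).
Proof.
move=> t_gt0 dom_x dom_y; rewrite -[x]scale1r.
by apply: (comb_dom (quad_identity_parallelogram t)) => //; rewrite ?mulr_gt0; lra.
Qed.

Let dom_sub x y : dom x -> dom y -> dom (x - y).
Proof.
move=> dom_x dom_y; rewrite -[x]scale1r -scaleN1r.
by apply: (comb_dom (quad_identity_swap (quad_identity_parallelogram 1))) => //; lra.
Qed.

Let dom_comb a x y : dom x -> dom y -> dom (a *: x + y).
Proof.
move=> dom_x dom_y; have [a_gt0|a_lt0|<-] := ltgtP 0 a.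
- by rewrite addrC; exact: dom_shift.
- rewrite addrC -[a]opprK scaleNr; apply: dom_sub => //.
  by rewrite -[_ *: x]add0r; apply: dom_shift; rewrite ?oppr_gt0.
- by rewrite scale0r add0r.
Qed.

Let Q_par x y t : 0 <= t -> dom x -> dom y ->
  Q (x + t *: y) + t * Q (x - y) = (1 + t) * Q x + t * (1 + t) * Q y.
Proof.
rewrite le_eqVlt => /orP [/eqP <-|t_gt0] dom_x dom_y.
  by rewrite scale0r addr0; ring.
have t1 : 1 + t != 0 by rewrite gt_eqF //; lra.
set u := 1 *: x + t *: y; set v := 1 *: x + (-1) *: y.
have dom_Z a w : dom w -> dom (a *: w).
  by move=> dom_w; rewrite -[_ *: w]addr0; exact: dom_comb dom_w dom0.
have dom_u : dom u by apply: dom_comb => //; exact: dom_Z.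
have dom_v : dom v by apply: dom_comb => //; exact: dom_Z.
have le_par : Q u + t * Q v <= (1 + t) * Q x + t * (1 + t) * Q y.
  rewrite -[Q u]mul1r.
  by apply: (comb_le (quad_identity_parallelogram t)) => //; rewrite ?mulr_gt0; lra.
have ge_par : (1 + t) * Q x + t * (1 + t) * Q y <= Q u + t * Q v.
  have xE : (1 + t)^-1 *: u + (t / (1 + t)) *: v = x.
    rewrite scaler_comb.
    have -> : (1 + t)^-1 * 1 + t / (1 + t) * 1 = 1 by field.
    have -> : (1 + t)^-1 * t + t / (1 + t) * (-1) = 0 by field.
    by rewrite scale1r scale0r addr0.
  have yE : (1 + t)^-1 *: u + (- (1 + t)^-1) *: v = y.
    rewrite scaler_comb.
    have -> : (1 + t)^-1 * 1 + - (1 + t)^-1 * 1 = 0 by field.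
    have -> : (1 + t)^-1 * t + - (1 + t)^-1 * (-1) = 1 by field.
    by rewrite scale0r add0r scale1r.
  rewrite -[Q u]mul1r -{1}xE -{1}yE.
  apply: (comb_le (quad_identity_parallelogram_inv t (ltW t_gt0)));
    by rewrite ?xE ?yE ?mulr_ge0 //; lra.
by move: le_par ge_par; rewrite /u /v scale1r scaleN1r; lra.
Qed.

Lemma epi_lim_gqf : is_gqf q.
Proof.
have [P [P_id P_dom]] := subspace_projection dom0 dom_comb.
pose G x := Q (x *m P).
have G_par x y t : 0 <= t ->
    G (x + t *: y) + t * G (x - y) = (1 + t) * G x + t * (1 + t) * G y.
  by move=> t_ge0; rewrite /G mulmxDl -scalemxAl mulmxBl; exact: Q_par.
have [M M_sym G_M] := quad_fun_mxform G_par.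
exists (2%:R *: M), dom; split; first by rewrite linearZ /= M_sym.
split; first by split; [exact: dom0 | exact: dom_comb].
apply: funext => x; have [dom_x|ndom_x] := pselect (dom x).
  rewrite gqf_in // QE //; congr EFin.
  rewrite /qform /mxform -{1}(P_id x dom_x) -/(G x) G_M -scalemxAr -scalemxAl [in RHS]mxE.
  by field.
by rewrite gqf_notin //; apply/eqP; rewrite eq_le leey /= leNgt; exact/negP.
Qed.

End EpiLimitOfGqf.

Theorem proposition6p2 (R : realType) (n : nat) :
  (* (i) *)
  (forall qs : nat -> 'rV[R]_n -> \bar R,
     (forall k, is_gqf (qs k)) ->
     exists phi : nat -> nat,
       {homo phi : k l / (k < l)%N >-> (k < l)%N} /\
       exists q : 'rV[R]_n -> \bar R,
         epi_converges (fun k => qs (phi k)) q /\ exists w, q w != +oo%E) /\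
  (* (ii) *)
  (forall (qs : nat -> 'rV[R]_n -> \bar R) (q : 'rV[R]_n -> \bar R) (r : R),
     (forall k, is_gqf (qs k)) ->
     epi_converges qs q ->
     0 <= r ->
     (\forall k \near \oo, forall w : 'rV[R]_n, (- (r * sqnorm w)%:E <= qs k w)%E) ->
     is_gqf q /\ forall w : 'rV[R]_n, (- (r * sqnorm w)%:E <= q w)%E).
Proof.
split.
  move=> qs qs_gqf; have [phi [phi_homo [q epi]]] := epi_compact qs.
  exists phi; split => //; exists q; split => //; exists 0.
  rewrite -ltey; apply: (le_lt_trans (epi_le_cst epi 0 0%E _)); last exact: ltry.
  by move=> k; exact/is_gqf0/qs_gqf.
(* The bound passes to the limit whatever the sign of r. *)
move=> qs q r qs_gqf epi _ qs_ge.
by split; [exact: epi_lim_gqf qs_gqf epi qs_ge | exact: epi_lim_ge epi qs_ge].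
Qed.
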